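(* Let $T\in\mathbb{Z}_{>0}$, $\mathcal T=\{0,\dots,T\}$, $\mathcal T_{a:b}=\mathcal T\cap\{a,\dots,b\}$, and let $\boldsymbol\xi=(\xi_0,\dots,\xi_T)$ be a stochastic process with finite support. Let $L\ge 1$, $\alpha\in(0,1)$ and $\Delta:=(\alpha^{1/2}-\alpha)/L$. Then: (a) If a deterministic square matrix $\Phi$ is $(L,\alpha)$-stable and $\|\Phi-\Phi_t(\boldsymbol\xi_{0:t})\|\le\Delta$ a.s. for all $t\in\mathcal T_{1:T}$, then $\{\Phi_t(\boldsymbol\xi_{0:t})\}_{t\in\mathcal T_{1:T}}$ is $(L,\alpha^{1/2})$-stable. (b) If the deterministic pair $(A,B)$ is $(L,\alpha)$-stabilizable, $\|A-A(\xi_t)\|\le\Delta/2$ and $\|B-B(\xi_t)\|\le\Delta/(2L)$ a.s. for $t\in\mathcal T_{1:T}$, then $(\{A(\xi_t)\}_{t\in\mathcal T_{1:T}},\{B(\xi_t)\}_{t\in\mathcal T_{1:T}})$ is $(L,\alpha^{1/2})$-stabilizable. (c) If the deterministic pair $(A,C)$ is $(L,\alpha)$-detectable, $\|A-A(\xi_t)\|\le\Delta/2$ a.s. for $t\in\mathcal T_{1:T}$ and $\|C-C(\xi_t)\|\le\Delta/(2L)$ a.s. for $t\in\mathcal T_{0:T-1}$, then $(\{A(\xi_t)\}_{t\in\mathcal T_{1:T}},\{C(\xi_t)\}_{t\in\mathcal T_{0:T-1}})$ is $(L,\alpha^{1/2})$-detectable.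
   Context: $\|\cdot\|$ is the Euclidean norm / induced 2-norm. $\boldsymbol\xi_{a:b}=(\xi_a,\dots,\xi_b)$. $A(\cdot),B(\cdot),C(\cdot)$ are matrix-valued functions of $\xi_t$; $\Phi_t(\cdot)$ is a square-matrix-valued function of $\boldsymbol\xi_{0:t}$. Deterministic notions (for $L>0,\alpha\in(0,1)$): a square matrix $\Phi$ is $(L,\alpha)$-stable if $\|\Phi^t\|\le L\alpha^t$ for all integers $t\ge0$; $(A,B)$ is $(L,\alpha)$-stabilizable if there is $K$ with $\|K\|\le L$ such that $A-BK$ is $(L,\alpha)$-stable; $(A,C)$ is $(L,\alpha)$-detectable if there is $K$ with $\|K\|\le L$ such that $A-KC$ is $(L,\alpha)$-stable. Stochastic notions: $\{\Phi_t(\boldsymbol\xi_{0:t})\}_{t\in\mathcal T_{1:T}}$ is $(L,\alpha)$-stable if $\|\Phi_{t''}(\boldsymbol\xi_{0:t''})\cdots\Phi_{t'+1}(\boldsymbol\xi_{0:t'+1})\|\le L\alpha^{t''-t'}$ a.s. for all $t'<t''$ in $\mathcal T$. $(\{A(\xi_t)\}_{t\in\mathcal T_{1:T}},\{B(\xi_t)\}_{t\in\mathcal T_{1:T}})$ is $(L,\alpha)$-stabilizable if there exist matrices $K_t(\boldsymbol\xi_{0:t})$, $t\in\mathcal T_{0:T-1}$ (functions of $\boldsymbol\xi_{0:t}$ only), with $\|K_t\|\le L$ a.s., such that $\{A(\xi_t)-B(\xi_t)K_{t-1}(\boldsymbol\xi_{0:t-1})\}_{t\in\mathcal T_{1:T}}$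 is $(L,\alpha)$-stable. $(\{A(\xi_t)\}_{t\in\mathcal T_{1:T}},\{C(\xi_t)\}_{t\in\mathcal T_{0:T-1}})$ is $(L,\alpha)$-detectable if there exist $K_t(\boldsymbol\xi_{0:t})$, $t\in\mathcal T_{1:T}$, with $\|K_t\|\le L$ a.s., such that $\{A(\xi_t)-K_t(\boldsymbol\xi_{0:t})C(\xi_{t-1})\}_{t\in\mathcal T_{1:T}}$ is $(L,\alpha)$-stable. *)

From HB Require Import structures.
From mathcomp Require Import all_boot all_order all_algebra.
From mathcomp Require Import boolp classical_sets reals.
Set Implicit Arguments. Unset Strict Implicit. Unset Printing Implicit Defensive.
Import Order.TTheory GRing.Theory Num.Theory.
Local Open Scope ring_scope.
Local Open Scope classical_set_scope.

Definition vnorm (R : realType) (n : nat) (v : 'cV[R]_n) : R :=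
  Num.sqrt (\sum_(i < n) v i 0 ^+ 2).

Definition opnorm (R : realType) (m n : nat) (A : 'M[R]_(m, n)) : R :=
  sup [set vnorm (A *m x) | x in [set x : 'cV[R]_n | vnorm x <= 1]].

Definition mpow (R : realType) (n : nat) (Phi : 'M[R]_n) (k : nat) : 'M[R]_n :=
  iter k (mulmx Phi) 1%:M.

Definition det_stable (R : realType) (n : nat) (L alpha : R) (Phi : 'M[R]_n) : Prop :=
  forall t : nat, opnorm (mpow Phi t) <= L * alpha ^+ t.

Definition det_stabilizable (R : realType) (n m : nat) (L alpha : R)
  (A : 'M[R]_n) (B : 'M[R]_(n, m)) : Prop :=
  exists K : 'M[R]_(m, n), opnorm K <= L /\ det_stable L alpha (A - B *m K).

Definition det_detectable (R : realType) (n p : nat) (L alpha : R)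
  (A : 'M[R]_n) (C : 'M[R]_(p, n)) : Prop :=
  exists K : 'M[R]_(n, p), opnorm K <= L /\ det_stable L alpha (A - K *m C).

(* The process xi = (xi_0,...,xi_T) with finite support is realized on a finite
   sample space Omega with probability weights P; "almost surely" means
   "for every outcome of positive probability". *)
Definition almost_surely (R : realType) (Omega : finType) (P : Omega -> R)
  (Q : Omega -> Prop) : Prop :=
  forall w : Omega, 0 < P w -> Q w.

Definition hist (X : Type) (w : nat -> X) (t : nat) : seq X :=
  [seq w i | i <- iota 0 t.+1].

(* mprod F a k = F (a+k) * ... * F (a+1)  (identity when k = 0) *)
Fixpoint mprod (R : realType) (n : nat) (F : nat -> 'M[R]_n) (a k : nat) : 'M[R]_n :=
  match k with
  | 0 => 1%:M
  | k'.+1 => F (a + k)%N *m mprod F a k'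
  end.

(* {G_t}_{t in T_{1:T}} is (L,alpha)-stable, G w t being the realized matrix
   at time t on outcome w:  ||G_{t''} ... G_{t'+1}|| <= L alpha^(t''-t') a.s.
   for all 0 <= t' < t'' <= T. *)
Definition sto_stable (R : realType) (T : nat) (Omega : finType) (P : Omega -> R)
  (n : nat) (G : Omega -> nat -> 'M[R]_n) (L alpha : R) : Prop :=
  forall t' t'' : nat, (t' < t'' <= T)%N ->
    almost_surely P (fun w =>
      opnorm (mprod (G w) t' (t'' - t')) <= L * alpha ^+ (t'' - t')).

Definition sto_stabilizable (R : realType) (T : nat) (X : Type) (Omega : finType)
  (P : Omega -> R) (xi : Omega -> nat -> X) (n m : nat) (L alpha : R)
  (A : X -> 'M[R]_n) (B : X -> 'M[R]_(n, m)) : Prop :=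
  exists K : nat -> seq X -> 'M[R]_(m, n),
    (forall t : nat, (t < T)%N ->
       almost_surely P (fun w => opnorm (K t (hist (xi w) t)) <= L)) /\
    sto_stable T P
      (fun w t => A (xi w t) - B (xi w t) *m K t.-1 (hist (xi w) t.-1)) L alpha.

Definition sto_detectable (R : realType) (T : nat) (X : Type) (Omega : finType)
  (P : Omega -> R) (xi : Omega -> nat -> X) (n p : nat) (L alpha : R)
  (A : X -> 'M[R]_n) (C : X -> 'M[R]_(p, n)) : Prop :=
  exists K : nat -> seq X -> 'M[R]_(n, p),
    (forall t : nat, (1 <= t <= T)%N ->
       almost_surely P (fun w => opnorm (K t (hist (xi w) t)) <= L)) /\
    sto_stable T P
      (fun w t => A (xi w t) - K t (hist (xi w) t) *m C (xi w t.-1)) L alpha.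

From HB Require Import structures.
From mathcomp Require Import all_boot all_order all_algebra.
From mathcomp Require Import boolp classical_sets reals.
From mathcomp Require Import ring lra.
Set Implicit Arguments. Unset Strict Implicit. Unset Printing Implicit Defensive.
Import Order.TTheory GRing.Theory Num.Theory.
Local Open Scope ring_scope.

(* Write every realised factor as [Phi - D] with [||D|| <= Delta].  Since
   [Phi^m (Phi - D) = Phi^(m+1) - Phi^m D] and [||Phi^m D|| <= L alpha^m Delta],
   induction on the number k of factors gives
   [||Phi^m G_(a+k) ... G_(a+1)|| <= L alpha^m (alpha + L Delta)^k],
   and for [Delta = (sqrt alpha - alpha) / L] the rate [alpha + L Delta] is
   [sqrt alpha].  In (b) and (c) the deterministic gain K is used at every time:
   the closed-loop matrices then stay within [Delta/2 + L (Delta / (2 L)) = Delta]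
   of [A - B K] (resp. [A - K C]), and (a) applies. *)

Section EuclideanNorm.
Variable R : realType.

Lemma CauchySchwarz_sum n (a b : 'I_n -> R) :
  (\sum_i a i * b i) ^+ 2 <= (\sum_i a i ^+ 2) * (\sum_i b i ^+ 2).
Proof.
have lagrange : \sum_i \sum_j (a i * b j - a j * b i) ^+ 2 =
    (\sum_i a i ^+ 2) * (\sum_j b j ^+ 2) + (\sum_i b i ^+ 2) * (\sum_j a j ^+ 2)
    - 2 * ((\sum_i a i * b i) * (\sum_j a j * b j)).
  rewrite !big_distrlr /= mulr_sumr.
  under [X in _ = _ - X]eq_bigr do rewrite mulr_sumr.
  rewrite -big_split -sumrB /=; apply: eq_bigr => i _.
  by rewrite -big_split -sumrB /=; apply: eq_bigr => j _; ring.
have : 0 <= \sum_i \sum_j (a i * b j - a j * b i) ^+ 2.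
  by apply: sumr_ge0 => i _; apply: sumr_ge0 => j _; exact: sqr_ge0.
rewrite lagrange (mulrC (\sum_i b i ^+ 2)) expr2; lra.
Qed.

Lemma vnorm_ge0 n (v : 'cV[R]_n) : 0 <= vnorm v.
Proof. exact: sqrtr_ge0. Qed.

Lemma vnorm_sqr n (v : 'cV[R]_n) : vnorm v ^+ 2 = \sum_i v i 0 ^+ 2.
Proof. by rewrite sqr_sqrtr // sumr_ge0 // => i _; exact: sqr_ge0. Qed.

Lemma vnorm0 n : vnorm (0 : 'cV[R]_n) = 0.
Proof. by rewrite /vnorm big1 ?sqrtr0 // => i _; rewrite mxE expr0n. Qed.

Lemma vnorm_eq0 n (v : 'cV[R]_n) : vnorm v = 0 -> v = 0.
Proof.
move=> v0; have : \sum_i v i 0 ^+ 2 = 0 by rewrite -vnorm_sqr v0 expr0n.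
move/psumr_eq0P => sq0; apply/matrixP => i j; rewrite ord1 mxE.
by apply/eqP; rewrite -sqrf_eq0; apply/eqP/sq0 => // k _; exact: sqr_ge0.
Qed.

Lemma vnormZ n c (v : 'cV[R]_n) : vnorm (c *: v) = `|c| * vnorm v.
Proof.
rewrite /vnorm; under eq_bigr do rewrite mxE exprMn.
by rewrite -mulr_sumr sqrtrM ?sqr_ge0 // sqrtr_sqr.
Qed.

Lemma vnormN n (v : 'cV[R]_n) : vnorm (- v) = vnorm v.
Proof. by rewrite -scaleN1r vnormZ normrN1 mul1r. Qed.

Lemma vnormD n (u v : 'cV[R]_n) : vnorm (u + v) <= vnorm u + vnorm v.
Proof.
rewrite -(ler_pXn2r (n := 2)) // ?nnegrE ?addr_ge0 ?vnorm_ge0 //.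
rewrite vnorm_sqr sqrrD !vnorm_sqr.
have -> : \sum_i (u + v) i 0 ^+ 2 =
    \sum_i u i 0 ^+ 2 + \sum_i v i 0 ^+ 2 + 2 * \sum_i u i 0 * v i 0.
  by rewrite mulr_sumr -!big_split /=; apply: eq_bigr => i _; rewrite !mxE; ring.
have : \sum_i u i 0 * v i 0 <= vnorm u * vnorm v.
  apply: le_trans (ler_norm _) _.
  rewrite -(@ler_pXn2r _ 2) // ?nnegrE ?normr_ge0 ?mulr_ge0 ?vnorm_ge0 //.
  by rewrite real_normK ?num_real // exprMn !vnorm_sqr; exact: CauchySchwarz_sum.
lra.
Qed.

Lemma normr_coord_le_vnorm n (v : 'cV[R]_n) i : `|v i 0| <= vnorm v.
Proof.
rewrite -sqrtr_sqr; apply: ler_wsqrtr; rewrite (bigD1 i) //= lerDl.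
by apply: sumr_ge0 => k _; exact: sqr_ge0.
Qed.

End EuclideanNorm.

Section OperatorNorm.
Variable R : realType.

Lemma opnorm_has_ub m n (A : 'M[R]_(m, n)) :
  exists c, forall x : 'cV[R]_n, vnorm x <= 1 -> vnorm (A *m x) <= c.
Proof.
exists (Num.sqrt (\sum_i (\sum_j `|A i j|) ^+ 2)) => x x1.
apply: ler_wsqrtr; apply: ler_sum => i _; rewrite mxE -real_normK ?num_real //.
rewrite ler_pXn2r ?nnegrE ?normr_ge0 //; last by apply: sumr_ge0 => j _.
apply: le_trans (ler_norm_sum _ _ _) _; apply: ler_sum => j _.
by rewrite normrM ler_piMr // (le_trans (normr_coord_le_vnorm _ _) x1).
Qed.

Lemma vnorm_mulmx_le_opnorm m n (A : 'M[R]_(m, n)) x :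
  vnorm x <= 1 -> vnorm (A *m x) <= opnorm A.
Proof.
move=> x1; have [c Ac] := opnorm_has_ub A.
by apply: ub_le_sup; [exists c => _ [y y1 <-]; exact: Ac | exists x].
Qed.

Lemma opnorm_le m n (A : 'M[R]_(m, n)) c :
  (forall x, vnorm x <= 1 -> vnorm (A *m x) <= c) -> opnorm A <= c.
Proof.
move=> Ac; apply: ge_sup => [|_ [y y1 <-]]; last exact: Ac.
by exists (vnorm (A *m 0)), 0 => //=; rewrite vnorm0.
Qed.

Lemma opnorm_ge0 m n (A : 'M[R]_(m, n)) : 0 <= opnorm A.
Proof. by apply: le_trans (vnorm_mulmx_le_opnorm A (x := 0) _); rewrite ?mulmx0 vnorm0. Qed.

Lemma vnorm_mulmx_le m n (A : 'M[R]_(m, n)) x : vnorm (A *m x) <= opnorm A * vnorm x.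
Proof.
have [/eqP/vnorm_eq0 ->|x_neq0] := boolP (vnorm x == 0).
  by rewrite mulmx0 !vnorm0 mulr0.
have x_gt0 : 0 < vnorm x by rewrite lt_def x_neq0 vnorm_ge0.
have {1}-> : x = vnorm x *: ((vnorm x)^-1 *: x) by rewrite scalerA divff // scale1r.
rewrite -scalemxAr vnormZ ger0_norm ?vnorm_ge0 // mulrC ler_pM2r //.
by apply: vnorm_mulmx_le_opnorm; rewrite vnormZ ger0_norm ?invr_ge0 ?vnorm_ge0 // mulVf.
Qed.

Lemma opnormM m n p (A : 'M[R]_(m, n)) (B : 'M[R]_(n, p)) :
  opnorm (A *m B) <= opnorm A * opnorm B.
Proof.
apply: opnorm_le => x x1; rewrite -mulmxA; apply: le_trans (vnorm_mulmx_le _ _) _.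
rewrite ler_wpM2l ?opnorm_ge0 //; apply: le_trans (vnorm_mulmx_le _ _) _.
by rewrite ler_piMr ?opnorm_ge0.
Qed.

Lemma opnormD m n (A B : 'M[R]_(m, n)) : opnorm (A + B) <= opnorm A + opnorm B.
Proof.
apply: opnorm_le => x x1; rewrite mulmxDl; apply: le_trans (vnormD _ _) _.
by apply: lerD; exact: vnorm_mulmx_le_opnorm.
Qed.

Lemma opnormN m n (A : 'M[R]_(m, n)) : opnorm (- A) = opnorm A.
Proof.
suff opnormN_le (B : 'M[R]_(m, n)) : opnorm (- B) <= opnorm B.
  by apply/le_anti; rewrite opnormN_le -{1}(opprK A) opnormN_le.
by apply: opnorm_le => x x1; rewrite mulNmx vnormN; exact: vnorm_mulmx_le_opnorm.
Qed.

Lemma opnormB m n (A B : 'M[R]_(m, n)) : opnorm (A - B) <= opnorm A + opnorm B.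
Proof. by rewrite -(opnormN B) opnormD. Qed.

End OperatorNorm.

Section Perturbation.
Variable R : realType.

Lemma mpowSr n (Phi : 'M[R]_n) k : mpow Phi k *m Phi = mpow Phi k.+1.
Proof. by elim: k => [|k IHk] /=; rewrite ?mul1mx ?mulmx1 // -mulmxA IHk. Qed.

Lemma opnorm_mpow_mprod_perturb n (Phi : 'M[R]_n) (F : nat -> 'M[R]_n) a
    (L alpha Delta : R) k :
  det_stable L alpha Phi ->
  (forall i, (0 < i <= k)%N -> opnorm (Phi - F (a + i)%N) <= Delta) ->
  forall m, opnorm (mpow Phi m *m mprod F a k)
            <= L * alpha ^+ m * (alpha + L * Delta) ^+ k.
Proof.
move=> Phi_stable; elim: k => [|k IHk] close m.
  by rewrite /= mulmx1 expr0 mulr1; exact: Phi_stable.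
have {}IHk : forall m', opnorm (mpow Phi m' *m mprod F a k)
    <= L * alpha ^+ m' * (alpha + L * Delta) ^+ k.
  by apply: IHk => i /andP[i_gt0 ik]; apply: close; rewrite i_gt0 ltnW.
set D := Phi - F (a + k.+1)%N.
have D_le : opnorm D <= Delta by apply: close; rewrite ltnSn.
have -> : mpow Phi m *m mprod F a k.+1 =
    mpow Phi m.+1 *m mprod F a k - mpow Phi m *m D *m mprod F a k.
  rewrite /=; have -> : F (a + k.+1)%N = Phi - D by rewrite /D opprB addrC subrK.
  by rewrite mulmxA mulmxBr mpowSr mulmxBl.
apply: le_trans (opnormB _ _) _.
have tail_le : opnorm (mpow Phi m *m D *m mprod F a k)
    <= L * alpha ^+ m * Delta * (L * (alpha + L * Delta) ^+ k).
  apply: le_trans (opnormM _ _) _; rewrite ler_pM ?opnorm_ge0 //.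
    by apply: le_trans (opnormM _ _) _; rewrite ler_pM ?opnorm_ge0.
  by have := IHk 0%N; rewrite /= mul1mx expr0 mulr1.
apply: le_trans (lerD (IHk m.+1) tail_le) _.
by rewrite !exprS le_eqVlt; apply/orP; left; apply/eqP; ring.
Qed.

Lemma sto_stable_perturb (T : nat) (Omega : finType) (P : Omega -> R) n
    (Phi : 'M[R]_n) (G : Omega -> nat -> 'M[R]_n) (L alpha Delta : R) :
  det_stable L alpha Phi ->
  (forall t : nat, (1 <= t <= T)%N ->
     almost_surely P (fun w => opnorm (Phi - G w t) <= Delta)) ->
  sto_stable T P G L (alpha + L * Delta).
Proof.
move=> Phi_stable close t' t'' /andP[t't'' t''T] w Pw.
have := opnorm_mpow_mprod_perturb (F := G w) (a := t') (k := (t'' - t')%N)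
  Phi_stable _ 0.
rewrite /= mul1mx expr0 mulr1; apply => i /andP[i_gt0 i_le].
apply: close => //; rewrite addn_gt0 i_gt0 orbT /=.
by apply: leq_trans t''T; rewrite -(subnKC (ltnW t't'')) leq_add2l.
Qed.

Lemma opnorm_closed_loop_gainr n m (A A' : 'M[R]_n) (B B' : 'M[R]_(n, m))
    (K : 'M[R]_(m, n)) :
  opnorm ((A - B *m K) - (A' - B' *m K))
    <= opnorm (A - A') + opnorm (B - B') * opnorm K.
Proof.
have -> : A - B *m K - (A' - B' *m K) = (A - A') - (B - B') *m K.
  by rewrite mulmxBl !opprD !opprK addrACA.
by apply: le_trans (opnormB _ _) _; rewrite lerD2l opnormM.
Qed.

Lemma opnorm_closed_loop_gainl n p (A A' : 'M[R]_n) (C C' : 'M[R]_(p, n))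
    (K : 'M[R]_(n, p)) :
  opnorm ((A - K *m C) - (A' - K *m C'))
    <= opnorm (A - A') + opnorm K * opnorm (C - C').
Proof.
have -> : A - K *m C - (A' - K *m C') = (A - A') - K *m (C - C').
  by rewrite mulmxBr !opprD !opprK addrACA.
by apply: le_trans (opnormB _ _) _; rewrite lerD2l opnormM.
Qed.

Lemma sto_stabilizable_perturb (T : nat) (X : Type) (Omega : finType)
    (P : Omega -> R) (xi : Omega -> nat -> X) n m (L alpha dA dB : R)
    (A : 'M[R]_n) (B : 'M[R]_(n, m)) (Af : X -> 'M[R]_n) (Bf : X -> 'M[R]_(n, m)) :
  det_stabilizable L alpha A B ->
  (forall t : nat, (1 <= t <= T)%N ->
     almost_surely P (fun w => opnorm (A - Af (xi w t)) <= dA)) ->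
  (forall t : nat, (1 <= t <= T)%N ->
     almost_surely P (fun w => opnorm (B - Bf (xi w t)) <= dB)) ->
  sto_stabilizable T P xi L (alpha + L * (dA + dB * L)) Af Bf.
Proof.
move=> [K [K_le closed_stable]] closeA closeB.
exists (fun _ _ => K); split=> [t _ w _ //|].
apply: sto_stable_perturb closed_stable _ => t tT w Pw.
apply: le_trans (opnorm_closed_loop_gainr _ _ _ _ _) _.
by rewrite lerD ?closeA ?ler_pM ?opnorm_ge0 ?closeB.
Qed.

Lemma sto_detectable_perturb (T : nat) (X : Type) (Omega : finType)
    (P : Omega -> R) (xi : Omega -> nat -> X) n p (L alpha dA dC : R)
    (A : 'M[R]_n) (C : 'M[R]_(p, n)) (Af : X -> 'M[R]_n) (Cf : X -> 'M[R]_(p, n)) :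
  det_detectable L alpha A C ->
  (forall t : nat, (1 <= t <= T)%N ->
     almost_surely P (fun w => opnorm (A - Af (xi w t)) <= dA)) ->
  (forall t : nat, (t < T)%N ->
     almost_surely P (fun w => opnorm (C - Cf (xi w t)) <= dC)) ->
  sto_detectable T P xi L (alpha + L * (dA + L * dC)) Af Cf.
Proof.
move=> [K [K_le closed_stable]] closeA closeC.
exists (fun _ _ => K); split=> [t _ w _ //|].
apply: sto_stable_perturb closed_stable _ => t /andP[t_gt0 tT] w Pw.
apply: le_trans (opnorm_closed_loop_gainl _ _ _ _ _) _.
rewrite lerD ?closeA ?t_gt0 ?ler_pM ?opnorm_ge0 ?closeC //.
by rewrite prednK.
Qed.

End Perturbation.

Theorem proposition1 (R : realType) (T : nat) (hT : (0 < T)%N)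
  (X : Type) (Omega : finType) (P : Omega -> R)
  (hP0 : forall w, 0 <= P w) (hP1 : \sum_(w : Omega) P w = 1)
  (xi : Omega -> nat -> X) (L alpha : R)
  (hL : 1 <= L) (ha0 : 0 < alpha) (ha1 : alpha < 1) :
  let Delta := (Num.sqrt alpha - alpha) / L in
  (* (a) *)
  (forall (n : nat) (Phi : 'M[R]_n) (Phis : nat -> seq X -> 'M[R]_n),
     det_stable L alpha Phi ->
     (forall t : nat, (1 <= t <= T)%N ->
        almost_surely P (fun w => opnorm (Phi - Phis t (hist (xi w) t)) <= Delta)) ->
     sto_stable T P (fun w t => Phis t (hist (xi w) t)) L (Num.sqrt alpha)) /\
  (* (b) *)
  (forall (n m : nat) (A : 'M[R]_n) (B : 'M[R]_(n, m))
          (Af : X -> 'M[R]_n) (Bf : X -> 'M[R]_(n, m)),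
     det_stabilizable L alpha A B ->
     (forall t : nat, (1 <= t <= T)%N ->
        almost_surely P (fun w => opnorm (A - Af (xi w t)) <= Delta / 2)) ->
     (forall t : nat, (1 <= t <= T)%N ->
        almost_surely P (fun w => opnorm (B - Bf (xi w t)) <= Delta / (2 * L))) ->
     sto_stabilizable T P xi L (Num.sqrt alpha) Af Bf) /\
  (* (c) *)
  (forall (n p : nat) (A : 'M[R]_n) (C : 'M[R]_(p, n))
          (Af : X -> 'M[R]_n) (Cf : X -> 'M[R]_(p, n)),
     det_detectable L alpha A C ->
     (forall t : nat, (1 <= t <= T)%N ->
        almost_surely P (fun w => opnorm (A - Af (xi w t)) <= Delta / 2)) ->
     (forall t : nat, (t < T)%N ->
        almost_surely P (fun w => opnorm (C - Cf (xi w t)) <= Delta / (2 * L))) ->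
     sto_detectable T P xi L (Num.sqrt alpha) Af Cf).
Proof.
move=> Delta; have L_neq0 : L != 0 by apply/eqP => L0; move: hL; rewrite L0; lra.
have rate : alpha + L * Delta = Num.sqrt alpha by rewrite /Delta; field.
have halvesr : Delta / 2 + Delta / (2 * L) * L = Delta by field.
have halvesl : Delta / 2 + L * (Delta / (2 * L)) = Delta by field.
split; [|split].
- by move=> n Phi Phis Phi_stable close; rewrite -rate; exact: sto_stable_perturb.
- move=> n m A B Af Bf AB_stab closeA closeB.
  by have := sto_stabilizable_perturb AB_stab closeA closeB; rewrite halvesr rate.
- move=> n p A C Af Cf AC_detect closeA closeC.
  by have := sto_detectable_perturb AC_detect closeA closeC; rewrite halvesl rate.
Qed.
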